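(* Let $a,b\in\mathbb{C}$ with $a\neq 0$. Let $y(x)=M(1;a;b;x)\in\mathbb{C}[[x]]$ be the master series with parameters $m=1$, $a$, $b$, i.e. $$y(x)=1+x+\sum_{\ell=2}^{\infty}\frac{x^{\ell}}{\ell!}\prod_{\gamma=1}^{\ell-1}(1-a\gamma+b\ell).$$ Then $y$ satisfies, as an identity of formal power series, $y^{a}=1+a\,x\,y^{b}$.
   Context: For $m,a,b\in\mathbb{C}$ the master series is the formal power series $M(m;a;b;x)=m+x+\sum_{\ell\ge 2}\frac{x^\ell}{\ell!}\prod_{\gamma=1}^{\ell-1}(m-a\gamma+b\ell)$. For a formal power series $f$ with constant term $1$ and $p\in\mathbb{C}$, $f^{p}$ denotes the formal power series $\exp(p\log f)$ (binomial series), so that $f^p$ has constant term $1$. *)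

From HB Require Import structures.
From mathcomp Require Import all_boot all_order all_algebra.
From mathcomp Require Import reals.
From mathcomp Require Import complex.
Set Implicit Arguments. Unset Strict Implicit. Unset Printing Implicit Defensive.
Import Order.TTheory GRing.Theory Num.Theory.
Local Open Scope ring_scope.
Local Open Scope complex_scope.

Section FPS.
Variable C : fieldType.

Definition fps := nat -> C.

Definition fps_one : fps := fun n => (n == 0%N)%:R.
Definition fps_X : fps := fun n => (n == 1%N)%:R.
Definition fps_add (f g : fps) : fps := fun n => f n + g n.
Definition fps_sub (f g : fps) : fps := fun n => f n - g n.
Definition fps_scale (c : C) (f : fps) : fps := fun n => c * f n.
Definition fps_mul (f g : fps) : fps :=
  fun n => \sum_(i < n.+1) f i * g (n - i)%N.
Definition fps_pow (f : fps) (k : nat) : fps := iter k (fps_mul f) fps_one.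

(* log f = sum_{k>=1} (-1)^(k+1) (f-1)^k / k, for f with constant term 1
   (the n-th coefficient only involves k <= n since (f-1)^k = O(x^k)) *)
Definition fps_log (f : fps) : fps :=
  fun n => \sum_(1 <= k < n.+1)
             ((-1) ^+ k.+1 / k%:R) * fps_pow (fps_sub f fps_one) k n.

Definition fps_exp (h : fps) : fps :=
  fun n => \sum_(k < n.+1) (k`!%:R)^-1 * fps_pow h k n.

Definition fps_cpow (f : fps) (p : C) : fps := fps_exp (fps_scale p (fps_log f)).

Definition master (m a b : C) : fps :=
  fun l => match l with
           | 0%N => m
           | 1%N => 1
           | _ => (l`!%:R)^-1 * \prod_(1 <= g < l) (m - a * g%:R + b * l%:R)
           end.
End FPS.

From mathcomp Require Import all_boot all_order all_algebra.
From mathcomp Require Import reals.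
From mathcomp Require Import complex.
From mathcomp Require Import ring.
From Stdlib Require Import FunctionalExtensionality.
Set Implicit Arguments. Unset Strict Implicit. Unset Printing Implicit Defensive.
Import Order.TTheory GRing.Theory Num.Theory.
Local Open Scope ring_scope.

(* For m in C let y_m be the series with coefficients
   (m / n!) prod_(1 <= g < n) (m - a g + b n), so that y_1 = M(1;a;b;x), and let L
   be the series with coefficients (1 / n!) prod_(1 <= g < n) (b n - a g), L_0 = 0.
   Comparing coefficients, the differential equation y_m' = m L' y_m is a
   convolution identity whose two sides are polynomials in m satisfying the same
   difference equation in steps of a; they agree at m = 0, hence at 0, -a, -2a, ...,
   hence everywhere.  So y_m = exp (m L), whence log y_1 = L and y_1^p = y_p for
   every p.  The claim y_a = 1 + a x y_b is then the coefficient relation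
   [y_a]_(n+1) = a [y_b]_n. *)

Section FormalCalculus.
Variable C : fieldType.
Hypothesis charC0 : [pchar C] =i pred0.
Implicit Types (f g h u v : fps C) (p q : {poly C}).

Lemma natf_eq0 n : (n%:R == 0 :> C) = (n == 0)%N.
Proof. exact: (pcharf0P C).1 charC0 n. Qed.

Lemma natfS_neq0 n : n.+1%:R != 0 :> C.
Proof. by rewrite natf_eq0. Qed.

Lemma natf_fact_neq0 n : n`!%:R != 0 :> C.
Proof. by rewrite natf_eq0 -lt0n fact_gt0. Qed.

Lemma natf_inj : injective (fun n : nat => n%:R : C).
Proof.
move=> i j /eqP; wlog le_ij : i j / (i <= j)%N.
  move=> W; case: (leqP i j) => [/W // | /ltnW le_ji].
  by rewrite eq_sym => /(W _ _ le_ji) ->.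
rewrite eq_sym -subr_eq0 -natrB // natf_eq0 subn_eq0 => le_ji.
by apply/eqP; rewrite eqn_leq le_ij.
Qed.

Definition fps_deriv f : fps C := fun n => n.+1%:R * f n.+1.

Definition fps_trunc (N : nat) f : {poly C} := \poly_(i < N.+1) f i.

Lemma coef_fps_trunc N f i : (i <= N)%N -> (fps_trunc N f)`_i = f i.
Proof. by move=> le_iN; rewrite coef_poly ltnS le_iN. Qed.

Lemma coefM_fps_mul p q f g n :
  (forall i, (i <= n)%N -> p`_i = f i) -> (forall i, (i <= n)%N -> q`_i = g i) ->
  (p * q)`_n = fps_mul f g n.
Proof.
move=> pf qg; rewrite coefM; apply: eq_bigr => i _.
rewrite pf; last by rewrite -ltnS.
by rewrite qg // leq_subr.
Qed.

Lemma fps_mulC f g : fps_mul f g =1 fps_mul g f.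
Proof.
move=> n; have tr h i : (i <= n)%N -> (fps_trunc n h)`_i = h i.
  exact: coef_fps_trunc.
by rewrite -(coefM_fps_mul (tr f) (tr g)) -(coefM_fps_mul (tr g) (tr f)) mulrC.
Qed.

Lemma fps_mulX g n : fps_mul (fps_X C) g n = if n is j.+1 then g j else 0.
Proof.
rewrite /fps_mul /fps_X; case: n => [|j]; first by rewrite big_ord1 mul0r.
rewrite 2!big_ord_recl big1 => [|i _]; last by rewrite mul0r.
by rewrite mul0r mul1r add0r addr0 subn1.
Qed.

Lemma coef_fps_pow N f k n :
  (n <= N)%N -> fps_pow f k n = ((fps_trunc N f) ^+ k)`_n.
Proof.
elim: k n => [|k IHk] n le_nN; first by rewrite expr0 coef1.
change (fps_pow f k.+1 n) with (fps_mul f (fps_pow f k) n).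
rewrite exprS; symmetry; apply: coefM_fps_mul => i le_in.
  by rewrite coef_fps_trunc // (leq_trans le_in).
by rewrite IHk // (leq_trans le_in).
Qed.

Lemma coef_expr_lt p k n : p`_0 = 0 -> (n < k)%N -> (p ^+ k)`_n = 0.
Proof.
move=> p0; elim: k n => [//|k IHk] n lt_nk.
rewrite exprS coefM big1 // => -[[|i] lt_in] _ /=; first by rewrite p0 mul0r.
by rewrite IHk ?mulr0 // ltn_subLR // addSnnS (leq_trans lt_nk) // leq_addl.
Qed.

Definition exp_poly N p : {poly C} := \sum_(k < N.+1) (k`!%:R)^-1 *: p ^+ k.

Definition log_poly N p : {poly C} :=
  \sum_(1 <= k < N.+1) ((-1) ^+ k.+1 / k%:R) *: p ^+ k.

Lemma coef_fps_exp N h n : h 0 = 0 -> (n <= N)%N ->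
  fps_exp h n = (exp_poly N (fps_trunc N h))`_n.
Proof.
move=> h0 le_nN; have H0 : (fps_trunc N h)`_0 = 0 by rewrite coef_fps_trunc.
rewrite /exp_poly coef_sum /fps_exp.
rewrite (big_ord_widen N.+1 (fun k => (k`!%:R)^-1 * fps_pow h k n)) //.
rewrite [RHS](bigID (fun k : 'I_N.+1 => (k < n.+1)%N)) /= [X in _ + X]big1 ?addr0.
  by apply: eq_bigr => k _; rewrite coefZ (coef_fps_pow _ _ le_nN).
by move=> k; rewrite -leqNgt => lt_nk; rewrite coefZ coef_expr_lt ?mulr0.
Qed.

Lemma coef_fps_log N f n : f 0 = 1 -> (n <= N)%N ->
  fps_log f n = (log_poly N (fps_trunc N (fps_sub f (fps_one C))))`_n.
Proof.
move=> f0 le_nN; set G := fps_trunc N _.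
have G0 : G`_0 = 0 by rewrite coef_fps_trunc // /fps_sub f0 subrr.
rewrite /log_poly coef_sum /fps_log [RHS](@big_cat_nat _ _ _ n.+1) //=.
rewrite [X in _ + X]big_nat_cond [X in _ + X]big1 ?addr0.
  by apply: eq_bigr => k _; rewrite coefZ (coef_fps_pow _ _ le_nN).
by move=> k /andP[/andP[lt_nk _] _]; rewrite coefZ coef_expr_lt ?mulr0.
Qed.

Lemma deriv_exp_poly N p :
  deriv (exp_poly N p) = (exp_poly N p - (N`!%:R)^-1 *: p ^+ N) * deriv p.
Proof.
rewrite {2}/exp_poly big_ord_recr /= addrK /exp_poly big_ord_recl derivD.
rewrite derivZ expr0 derivC scaler0 add0r raddf_sum mulr_suml.
apply: eq_bigr => k _; rewrite /= derivZ deriv_exp /= -scalerAl -scaler_nat.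
rewrite scalerA mulrC; congr (_ *: _); last by rewrite mulrC.
by rewrite /bump leq0n add1n factS natrM invfM mulrA mulfV ?mul1r ?natfS_neq0.
Qed.

Lemma deriv_log_poly N p :
  deriv (log_poly N p) = (\sum_(k < N) (- p) ^+ k) * deriv p.
Proof.
rewrite /log_poly big_add1 /= big_mkord raddf_sum mulr_suml; apply: eq_bigr => k _.
rewrite /= derivZ deriv_exp /= -scaler_nat scalerA (mulrC (deriv p)) scalerAl.
congr (_ * _); rewrite -scaleN1r exprZn; congr (_ *: _).
by rewrite divfK ?natfS_neq0 // !exprS !mulN1r opprK.
Qed.

Lemma fps_exp0 h : fps_exp h 0 = 1.
Proof. by rewrite /fps_exp big_ord1 /= invr1 mul1r. Qed.

Lemma fps_deriv_exp h : h 0 = 0 ->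
  fps_deriv (fps_exp h) =1 fps_mul (fps_deriv h) (fps_exp h).
Proof.
move=> h0 n; set N := n.+1; set H := fps_trunc N h; set E := exp_poly N H.
have H0 : H`_0 = 0 by rewrite coef_fps_trunc.
have hE i : (i <= N)%N -> fps_exp h i = E`_i by move=> le_iN; exact: coef_fps_exp.
have -> : fps_deriv (fps_exp h) n = (deriv E)`_n.
  by rewrite coef_deriv /fps_deriv hE // mulr_natl.
have top_term : (H ^+ N * deriv H)`_n = 0.
  by rewrite coefM big1 // => i _; rewrite coef_expr_lt ?mul0r.
rewrite deriv_exp_poly mulrBl coefB -scalerAl coefZ top_term mulr0 subr0 mulrC.
apply: coefM_fps_mul => i le_in.
  by rewrite coef_deriv coef_fps_trunc // /fps_deriv mulr_natl.
by rewrite hE // (leq_trans le_in).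
Qed.

Lemma fps_mul_deriv_log f : f 0 = 1 ->
  fps_mul f (fps_deriv (fps_log f)) =1 fps_deriv f.
Proof.
move=> f0 n; set N := n.+1; set G := fps_trunc N (fps_sub f (fps_one C)).
have G0 : G`_0 = 0 by rewrite coef_fps_trunc // /fps_sub f0 subrr.
have trunc_f : fps_trunc N f = 1 + G.
  apply/polyP => i; rewrite coefD coef1 !coef_poly /fps_sub /fps_one.
  case: ifP => lt_iN; first by rewrite addrC subrK.
  by case: i lt_iN => [|i] //; rewrite addr0.
have geometric : (1 + G) * \sum_(k < N) (- G) ^+ k = 1 - (- G) ^+ N.
  by rewrite -[1 + G]opprK opprD [-1 - G]addrC mulNr -subrX1 opprB.
rewrite -(@coefM_fps_mul (fps_trunc N f) (deriv (log_poly N G))).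
- have top_term : ((- G) ^+ N * deriv G)`_n = 0.
    by rewrite coefM big1 // => i _; rewrite coef_expr_lt ?mul0r // coefN G0 oppr0.
  rewrite trunc_f deriv_log_poly mulrA geometric mulrBl mul1r coefB top_term.
  by rewrite subr0 coef_deriv coef_fps_trunc // /fps_deriv /fps_sub /fps_one /= subr0 mulr_natl.
- by move=> i le_in; rewrite coef_fps_trunc // (leq_trans le_in).
- by move=> i le_in; rewrite coef_deriv /fps_deriv -coef_fps_log ?mulr_natl.
Qed.

Lemma fps_linear_ode_uniq g u v : u 0 = v 0 ->
  fps_deriv u =1 fps_mul g u -> fps_deriv v =1 fps_mul g v -> u = v.
Proof.
move=> uv0 du dv; apply: functional_extensionality; elim/ltn_ind => -[//|n] IH.
apply: (mulfI (natfS_neq0 n)); move: (du n) (dv n); rewrite /fps_deriv => -> ->.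
by apply: eq_bigr => i _; rewrite IH // ltnS leq_subr.
Qed.

Lemma fps_mul_unitI f u v : f 0 != 0 -> fps_mul f u =1 fps_mul f v -> u = v.
Proof.
move=> f0 fuv; apply: functional_extensionality; elim/ltn_ind => n IH.
move: (fuv n); rewrite /fps_mul !big_ord_recl subn0.
have -> : \sum_(i < n) f (lift ord0 i) * u (n - lift ord0 i)%N
        = \sum_(i < n) f (lift ord0 i) * v (n - lift ord0 i)%N.
  by apply: eq_bigr => i _; rewrite IH // lift0 ltn_subrL (leq_ltn_trans _ (ltn_ord i)).
by move/addIr/(mulfI f0).
Qed.

Lemma fps_deriv_inj u v : u 0 = v 0 -> fps_deriv u = fps_deriv v -> u = v.
Proof.
move=> uv0 duv; apply: functional_extensionality => -[//|n].
by apply: (mulfI (natfS_neq0 n)); exact: (congr1 (fun w => w n) duv).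
Qed.

Definition polyfun (F : C -> C) := exists p : {poly C}, F =1 horner p.

Lemma polyfun_ext F G : F =1 G -> polyfun G -> polyfun F.
Proof. by move=> FG [p Gp]; exists p => m; rewrite FG Gp. Qed.

Lemma polyfun_cst c : polyfun (fun=> c).
Proof. by exists c%:P => m; rewrite hornerC. Qed.

Lemma polyfun_id : polyfun id.
Proof. by exists 'X => m; rewrite hornerX. Qed.

Lemma polyfunD F G : polyfun F -> polyfun G -> polyfun (fun m => F m + G m).
Proof. by move=> [p Fp] [q Gq]; exists (p + q) => m; rewrite hornerD Fp Gq. Qed.

Lemma polyfunN F : polyfun F -> polyfun (fun m => - F m).
Proof. by move=> [p Fp]; exists (- p) => m; rewrite hornerN Fp. Qed.

Lemma polyfunM F G : polyfun F -> polyfun G -> polyfun (fun m => F m * G m).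
Proof. by move=> [p Fp] [q Gq]; exists (p * q) => m; rewrite hornerM Fp Gq. Qed.

Lemma polyfun_sum (r : seq nat) (F : nat -> C -> C) :
  (forall i, polyfun (F i)) -> polyfun (fun m => \sum_(i <- r) F i m).
Proof.
move=> FP; elim: r => [|i r IHr].
  by apply: (polyfun_ext _ (polyfun_cst 0)) => m; rewrite big_nil.
by apply: (polyfun_ext _ (polyfunD (FP i) IHr)) => m; rewrite big_cons.
Qed.

Lemma polyfun_prod (r : seq nat) (F : nat -> C -> C) :
  (forall i, polyfun (F i)) -> polyfun (fun m => \prod_(i <- r) F i m).
Proof.
move=> FP; elim: r => [|i r IHr].
  by apply: (polyfun_ext _ (polyfun_cst 1)) => m; rewrite big_nil.
by apply: (polyfun_ext _ (polyfunM (FP i) IHr)) => m; rewrite big_cons.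
Qed.

Lemma polyfun_periodic_eq0 a F : a != 0 -> polyfun F ->
  (forall m, F m = F (m - a)) -> F 0 = 0 -> forall m, F m = 0.
Proof.
move=> a0 [p Fp] Fper F0.
have roots k : p.[- (k%:R * a)] = 0.
  elim: k => [|k IHk]; first by rewrite mul0r oppr0 -Fp.
  have -> : - (k.+1%:R * a) = - (k%:R * a) - a by rewrite -natr1 mulrDl mul1r opprD.
  by rewrite -Fp -Fper Fp.
suff p0 : p = 0 by move=> m; rewrite Fp p0 horner0.
apply/eqP; apply: contraT => p_neq0.
have := max_poly_roots (rs := [seq - (k%:R * a) | k <- iota 0 (size p)]) p_neq0.
rewrite size_map size_iota ltnn; apply.
  by apply/allP => _ /mapP[k _ ->]; rewrite /root roots.
rewrite map_inj_uniq ?iota_uniq // => i j /oppr_inj /(mulIf a0).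
exact: natf_inj.
Qed.

Section MasterPowers.
Variables a b : C.
Hypothesis a_neq0 : a != 0.

Definition master_factor (m : C) (n : nat) : C :=
  \prod_(1 <= g < n) (m - a * g%:R + b * n%:R).

(* [master_pow m] is y_m, [master_log] is L, and [master_dcoef m n.+1] is the
   n-th coefficient of y_m'/m (a polynomial in m, so meaningful at m = 0). *)
Definition master_pow (m : C) : fps C :=
  fun n => if n is 0 then 1 else (n`!%:R)^-1 * (m * master_factor m n).

Definition master_dcoef (m : C) (n : nat) : C := (n.-1`!%:R)^-1 * master_factor m n.

Definition master_log : fps C :=
  fun n => if n is 0 then 0 else (n`!%:R)^-1 * master_factor 0 n.

Definition master_conv (m : C) (n : nat) : C :=
  \sum_(1 <= k < n.+1) master_dcoef 0 k * master_pow m (n - k)%N.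

Lemma master_factor_shiftl m j :
  master_factor m j.+2 = (m - a + b * j.+2%:R) * master_factor (m - a + b) j.+1.
Proof.
rewrite /master_factor big_nat_recl //; congr (_ * _); first by rewrite mulr1.
by apply: eq_bigr => g _; ring.
Qed.

Lemma master_factor_shiftr m j :
  master_factor (m - a) j.+2
  = master_factor (m - a + b) j.+1 * (m - a * j.+2%:R + b * j.+2%:R).
Proof.
rewrite /master_factor big_nat_recr //=; congr (_ * _); last by ring.
by apply: eq_bigr => g _; ring.
Qed.

Lemma master_pow_shift m j :
  master_pow m j.+1 - master_pow (m - a) j.+1 = a * master_pow (m - a + b) j.
Proof.
case: j => [|j].
  by rewrite /master_pow /master_factor !big_geq //= invr1 !mul1r !mulr1 opprB addrC subrK.
rewrite /master_pow master_factor_shiftl master_factor_shiftr factS natrM invfM.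
by field; rewrite natf_fact_neq0 -natrD natf_eq0 add2n.
Qed.

Lemma master_dcoef_shift m j :
  master_dcoef m j.+2 - master_dcoef (m - a) j.+2 = a * master_dcoef (m - a + b) j.+1.
Proof.
rewrite /master_dcoef master_factor_shiftl master_factor_shiftr /= factS natrM invfM.
by field; rewrite natf_fact_neq0 addrC natr1 natfS_neq0.
Qed.

Lemma master_conv_shift m n :
  master_conv m n.+1 - master_conv (m - a) n.+1 = a * master_conv (m - a + b) n.
Proof.
rewrite /master_conv !(big_nat_recr n.+1 1) //= subnn opprD addrACA subrr addr0.
rewrite -sumrB mulr_sumr; apply: eq_big_nat => k /andP[_ le_kn].
by rewrite -mulrBr subSn // master_pow_shift mulrCA.
Qed.

Lemma master_conv0 n : master_conv 0 n.+1 = master_dcoef 0 n.+1.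
Proof.
rewrite /master_conv big_nat_recr //= subnn mulr1 big_nat_cond big1 ?add0r //.
by move=> k /andP[/andP[_ lt_kn] _]; rewrite subSn // /master_pow mul0r !mulr0.
Qed.

Lemma polyfun_master_factor n : polyfun (master_factor^~ n).
Proof.
apply: polyfun_prod => g.
apply: (polyfun_ext _ (polyfunD polyfun_id (polyfun_cst (- (a * g%:R) + b * n%:R)))).
by move=> m; rewrite /= addrA.
Qed.

Lemma polyfun_master_conv_sub_dcoef n :
  polyfun (fun m => master_conv m n - master_dcoef m n).
Proof.
apply: polyfunD; last exact/polyfunN/polyfunM/polyfun_master_factor/polyfun_cst.
apply: polyfun_sum => k; apply/polyfunM; first exact: polyfun_cst.
case: (n - k)%N => [|j]; first exact: polyfun_cst.
by apply/polyfunM/polyfunM/polyfun_master_factor; [apply: polyfun_cst | apply: polyfun_id].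
Qed.

Lemma master_conv_dcoef m n : master_conv m n.+1 = master_dcoef m n.+1.
Proof.
elim: n m => [|n IHn] m.
  by rewrite /master_conv big_nat1 /master_dcoef /master_factor !big_geq //= mulr1.
apply/eqP; rewrite -subr_eq0; apply/eqP; move: m.
apply: (polyfun_periodic_eq0 a_neq0 (polyfun_master_conv_sub_dcoef n.+2)).
- move=> m; have /eqP : master_conv m n.+2 - master_conv (m - a) n.+2
                       = master_dcoef m n.+2 - master_dcoef (m - a) n.+2.
    by rewrite master_conv_shift master_dcoef_shift IHn.
  by rewrite subr_eq => /eqP ->; ring.
- by rewrite master_conv0 subrr.
Qed.

Lemma fps_deriv_master_log n : fps_deriv master_log n = master_dcoef 0 n.+1.
Proof. by rewrite /fps_deriv /= factS natrM invfM !mulrA mulfV ?natfS_neq0 ?mul1r. Qed.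

Lemma fps_deriv_master_pow m n :
  fps_deriv (master_pow m) n = m * master_dcoef m n.+1.
Proof.
rewrite /fps_deriv /master_pow /master_dcoef /= factS natrM invfM !mulrA.
by rewrite mulfV ?natfS_neq0 // mul1r [_^-1 * m]mulrC.
Qed.

Lemma master_pow_ode m :
  fps_deriv (master_pow m) =1 fps_mul (fps_deriv (fps_scale m master_log)) (master_pow m).
Proof.
move=> n; rewrite fps_deriv_master_pow -master_conv_dcoef /master_conv big_add1 /=.
rewrite big_mkord mulr_sumr; apply: eq_bigr => i _.
by rewrite subSS /fps_scale -fps_deriv_master_log /fps_deriv mulrA mulrCA.
Qed.

Lemma master_pow_exp m : master_pow m = fps_exp (fps_scale m master_log).
Proof.
apply: (fps_linear_ode_uniq _ (master_pow_ode m)); first by rewrite fps_exp0.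
by apply: fps_deriv_exp; rewrite /fps_scale mulr0.
Qed.

Lemma master_pow1 : master 1 a b = master_pow 1.
Proof.
apply: functional_extensionality => -[|[|n]] //; rewrite /master_pow /master_factor /=.
  by rewrite big_geq // invr1 mul1r mulr1.
by rewrite mul1r.
Qed.

Lemma fps_log_master : fps_log (master 1 a b) = master_log.
Proof.
have scale1 : fps_scale 1 master_log = master_log.
  by apply: functional_extensionality => n; rewrite /fps_scale mul1r.
apply: fps_deriv_inj; first by rewrite /fps_log big_geq.
apply: (fps_mul_unitI (f := master 1 a b)); first exact: oner_neq0.
move=> n; rewrite fps_mul_deriv_log // fps_mulC master_pow1 master_pow_exp scale1.
by rewrite fps_deriv_exp.
Qed.

Lemma fps_cpow_master (p : C) : fps_cpow (master 1 a b) p = master_pow p.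
Proof. by rewrite /fps_cpow fps_log_master -master_pow_exp. Qed.

Lemma master_pow_aS j : master_pow a j.+1 = a * master_pow b j.
Proof.
case: j => [|j]; first by rewrite /master_pow /master_factor big_geq //= invr1 mul1r mulr1.
rewrite /master_pow master_factor_shiftl subrr !add0r factS natrM invfM.
by field; rewrite natf_fact_neq0 -natrD natf_eq0 add2n.
Qed.

End MasterPowers.
End FormalCalculus.

Local Open Scope complex_scope.

Theorem mainTheorem1 (R : realType) (a b : R[i]) (ha : a != 0) :
  fps_cpow (master 1 a b) a
  = fps_add (fps_one R[i]) (fps_scale a (fps_mul (fps_X R[i]) (fps_cpow (master 1 a b) b))).
Proof.
have charC0 : [pchar R[i]] =i pred0 := pchar_num _.
rewrite !(fps_cpow_master charC0 b ha); apply: functional_extensionality => n.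
rewrite /fps_add /fps_scale fps_mulX; case: n => [|j].
- by rewrite mulr0 addr0.
- by rewrite (master_pow_aS charC0) /fps_one add0r.
Qed.
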